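(* Let $G$ be a connected graph of order at least two and let $D$ be a minimal certified dominating set of $G$. If $v$ is a vertex with $N_G[v]\subseteq D$, then $v$ is a leaf or a weak support of $G$. Moreover, the induced subgraph $G[\{v\in D\colon N_G[v]\subseteq D\}]$ is a corona (or has no vertices).
   Context: All graphs are finite and simple; $N_G[v]=N_G(v)\cup\{v\}$. A leaf is a vertex of degree one; a support is the neighbor of a leaf; a support is weak if it is adjacent to exactly one leaf and strong if adjacent to at least two leaves. A set $D\subseteq V_G$ is a dominating set of $G$ if every vertex of $V_G-D$ has a neighbor in $D$. A set $D$ is a certified dominating set of $G$ if $D$ is dominating and every vertex of $D$ has either zero or at least two neighbors in $V_G-D$; it is a minimal certified dominating set if no proper subset of $D$ is a certified dominating set. A graph is a corona if it equals $H\circ K_1$ for some graph $H$, i.e., it is obtained from $H$ by attaching one new pendant vertex to each vertex of $H$; equivalently every vertex is a leaf or adjacent to exactly one leaf. *)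

From mathcomp Require Import all_boot.
Set Implicit Arguments. Unset Strict Implicit. Unset Printing Implicit Defensive.

Section Graphs.
Variables (T : finType) (e : rel T).

Definition simple_graph : Prop := symmetric e /\ irreflexive e.

Definition connected_graph : Prop := forall x y : T, connect e x y.

Definition nbhd (v : T) : {set T} := [set u | e v u].
Definition cnbhd (v : T) : {set T} := v |: nbhd v.

Definition leaf (v : T) : bool := #|nbhd v| == 1.
Definition support (v : T) : bool := [exists u, e v u && leaf u].
Definition leaf_nbrs (v : T) : {set T} := [set u | e v u && leaf u].
Definition weak_support (v : T) : bool := #|leaf_nbrs v| == 1.
Definition strong_support (v : T) : bool := 2 <= #|leaf_nbrs v|.

Definition dominating (D : {set T}) : Prop :=
  forall x, x \notin D -> exists2 y, y \in D & e x y.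

Definition certified_dominating (D : {set T}) : Prop :=
  dominating D /\
  forall v, v \in D -> (#|nbhd v :\: D| = 0 \/ 2 <= #|nbhd v :\: D|).

Definition minimal_certified_dominating (D : {set T}) : Prop :=
  certified_dominating D /\
  forall D' : {set T}, D' \proper D -> ~ certified_dominating D'.

(* The induced subgraph G[S] is a corona H o K1: its vertex set S splits into
   the vertices B of H and, for each b in B, one new pendant vertex f b whose
   only neighbour in G[S] is b. *)
Definition induced_corona (S : {set T}) : Prop :=
  exists (B : {set T}) (f : T -> T),
    [/\ B \subset S,
        {in B &, injective f},
        S = B :|: f @: B,
        [disjoint B & f @: B]
      & forall b, b \in B -> [set u in S | e (f b) u] = [set b]].

End Graphs.

(* Call v enclosed when N[v] is contained in D.  If A is a nonempty set of
   enclosed vertices in which every vertex has a neighbour outside A, and no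
   enclosed vertex outside A has exactly one neighbour in A, then D minus A is
   still certified dominating; minimality of D rules out such a set.  With
   A = {v} this shows every enclosed vertex has an enclosed neighbour; two
   leaves at an enclosed vertex form such an A; and an enclosed vertex that is
   neither a leaf nor a support produces one as well (from a maximal
   independent set, completed by pendant leaves).  So every enclosed non-leaf
   vertex carries exactly one leaf, itself enclosed, and these pairs form the
   corona, the only exception being G = K2. *)

From Pilot Require Import Defs.
From mathcomp Require Import all_boot.
Set Implicit Arguments. Unset Strict Implicit. Unset Printing Implicit Defensive.

Section Graph.
Variables (T : finType) (e : rel T).
Hypotheses (e_sym : symmetric e) (e_irr : irreflexive e).

Lemma in_nbhd v u : (u \in nbhd e v) = e v u.
Proof. by rewrite inE. Qed.

Lemma in_cnbhd v u : (u \in cnbhd e v) = (u == v) || e v u.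
Proof. by rewrite !inE. Qed.

Lemma in_leaf_nbrs v l : (l \in leaf_nbrs e v) = e v l && leaf e l.
Proof. by rewrite inE. Qed.

Lemma adj_neq x y : e x y -> x != y.
Proof. by apply: contraTneq => ->; rewrite e_irr. Qed.

Lemma leaf_nbhd v u : leaf e v -> e v u -> nbhd e v = [set u].
Proof.
move=> /cards1P [x nbhd_v] evu.
by have := evu; rewrite -in_nbhd nbhd_v => /set1P <-.
Qed.

Lemma leaf_adj_uniq v u w : leaf e v -> e v u -> e v w -> w = u.
Proof. by move=> lv evu; rewrite -in_nbhd (leaf_nbhd lv evu) => /set1P. Qed.

(* [support] alone would resolve to the notation of the algebra library. *)
Lemma leaf_adj_support s l : e s l -> leaf e l -> Defs.support e s.
Proof. by move=> esl ll; apply/existsP; exists l; apply/andP. Qed.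

Lemma card_nbhdI_eq0 u (A : {set T}) :
  (forall x, e u x -> x \notin A) -> #|nbhd e u :&: A| = 0.
Proof.
move=> nbhd_out; apply/eqP; rewrite cards_eq0; apply/eqP/setP => x.
by rewrite !inE; apply/negbTE/nandP; case eux: (e u x); [right; apply: nbhd_out|left].
Qed.

Lemma connected_nbr : connected_graph e -> 1 < #|T| -> forall v, exists u, e v u.
Proof.
move=> e_conn /card_gt1P [x [y [_ _ xy]]] v.
have [w wv] : exists w, w != v.
  by case: (eqVneq x v) => [<-|]; [exists y; rewrite eq_sym | exists x].
have /connectP [[|z p] /= pth wE] := e_conn v w; first by rewrite wE eqxx in wv.
by case/andP: pth => evz _; exists z.
Qed.

Lemma exists_core_subset (Z : {set T}) :
  Z != set0 -> {in Z, forall z, 1 < #|nbhd e z|} ->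
  exists Y : {set T}, [/\ Y != set0, Y \subset Z,
    {in Y, forall a, exists2 y, e a y & y \notin Y} &
    {in Z :\: Y, forall u, #|nbhd e u :&: Y| != 1}].
Proof.
move=> Zn0 Zdeg.
(* Y is Z minus a maximal independent set of vertices whose whole neighbourhood lies in Z. *)
pose N := [set z in Z | nbhd e z \subset Z].
pose indep (I : {set T}) := (I \subset N) && [forall x in I, nbhd e x :&: I == set0].
have indep0 : indep set0 by rewrite /indep sub0set; apply/forall_inP => x; rewrite inE.
have [I maxI _] := maxset_exists indep0.
have /andP [IN /forall_inP Iind] := maxsetp maxI.
have I_indep x y : x \in I -> y \in I -> ~~ e x y.
  by move=> xI yI; apply: contraTN (Iind x xI) => exy; apply/set0Pn; exists y; rewrite !inE exy.
have I_dom z : z \in N -> z \notin I -> exists2 i, i \in I & e z i.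
  move=> zN zI; have [/exists_inP [i iI ezi] | none] := boolP [exists i in I, e z i].
    by exists i.
  have no_edge i : i \in I -> ~~ e z i by move=> iI; apply: contra none => ezi; apply/exists_inP; exists i.
  suff /(maxsetsup maxI)/(_ (subsetUr _ _)) zIE : indep (z |: I).
    by move: zI; rewrite -zIE setU11.
  rewrite /indep subUset sub1set zN IN /=; apply/forall_inP => x.
  rewrite in_setU1 => x_in; apply/eqP/setP => y; rewrite !inE.
  apply/negbTE/andP => -[exy /predU1P [yz | yI]]; move: exy; first rewrite yz.
    by case/predU1P: x_in => [-> | xI]; rewrite ?e_irr // e_sym (negbTE (no_edge x xI)).
  by case/predU1P: x_in => [-> | xI]; rewrite ?(negbTE (no_edge y yI)) ?(negbTE (I_indep x y xI yI)).
have I_nbhd u : u \in I -> nbhd e u \subset Z :\: I.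
  move=> uI; have := subsetP IN u uI; rewrite inE => /andP [_ nbZ].
  apply/subsetP => y yn; rewrite inE (subsetP nbZ) // andbT.
  by apply: contraTN yn => yI; rewrite in_nbhd I_indep.
exists (Z :\: I); split.
- have [z zZ] := set0Pn _ Zn0.
  have [zI | zI] := boolP (z \in I); last by apply/set0Pn; exists z; rewrite inE zI.
  have /card_gt0P [y yn] : 0 < #|nbhd e z| by apply: ltnW; apply: Zdeg.
  by apply/set0Pn; exists y; apply: (subsetP (I_nbhd z zI)).
- exact: subsetDl.
- move=> a; rewrite inE => /andP [aI aZ].
  have [aN | aN] := boolP (a \in N).
    by have [i iI eai] := I_dom a aN aI; exists i; rewrite // inE iI.
  move: aN; rewrite inE aZ /= => /subsetPn [y yn yZ].
  by exists y; rewrite -?in_nbhd // inE (negbTE yZ) andbF.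
- move=> u; rewrite !inE negb_and negbK => /andP [/orP [uI | /negP //] uZ].
  by rewrite (setIidPl (I_nbhd u uI)) neq_ltn Zdeg ?orbT.
Qed.

Lemma connected_leaf_edge x u :
  connected_graph e -> leaf e x -> leaf e u -> e x u -> forall y, y \in [set x; u].
Proof.
move=> e_conn lx lu exu y.
suff xu_closed : closed e [set x; u] by rewrite -(closed_connect xu_closed (e_conn x y)) set21.
have nbr_in z w : z \in [set x; u] -> e z w -> w \in [set x; u].
  case/set2P => -> ezw; apply/set2P.
    by right; apply: leaf_adj_uniq lx exu ezw.
  by left; apply: leaf_adj_uniq lu _ ezw; rewrite e_sym.
move=> z w ezw; apply/idP/idP => [zin | win]; first exact: nbr_in zin ezw.
by apply: nbr_in win _; rewrite e_sym.
Qed.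

Lemma induced_corona_edge x u : e x u -> induced_corona e [set x; u].
Proof.
move=> exu; exists [set x], (fun=> u); split.
- by rewrite sub1set set21.
- by move=> a b /set1P -> /set1P ->.
- by rewrite imset_set1.
- by rewrite imset_set1 disjoints1 inE adj_neq.
move=> b /set1P ->; apply/setP => w; rewrite !inE.
case: (eqVneq w x) => [-> | _]; first by rewrite e_sym.
by case: (eqVneq w u) => [-> | _]; rewrite ?e_irr.
Qed.

Definition leaf_nbr v := odflt v [pick l in leaf_nbrs e v].

Lemma weak_support_leaf_nbrs v : weak_support e v -> leaf_nbrs e v = [set leaf_nbr v].
Proof.
move=> /cards1P [l leaves_v]; rewrite /leaf_nbr leaves_v.
by case: pickP => [x /set1P -> | /(_ l)]; rewrite ?set11.
Qed.

Lemma leaf_nbrP v : weak_support e v -> e v (leaf_nbr v) && leaf e (leaf_nbr v).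
Proof. by move/weak_support_leaf_nbrs => leaves_v; rewrite -in_leaf_nbrs leaves_v set11. Qed.

Lemma induced_corona_pendants (S : {set T}) :
  {in S, forall b, ~~ leaf e b -> weak_support e b && (leaf_nbr b \in S)} ->
  {in S, forall y, leaf e y -> exists2 s, s \in S & e y s && ~~ leaf e s} ->
  induced_corona e S.
Proof.
move=> S_nonleaf S_leaf; pose B := [set b in S | ~~ leaf e b].
have fB b : b \in B -> [/\ b \in S, e b (leaf_nbr b), leaf e (leaf_nbr b) & leaf_nbr b \in S].
  rewrite inE => /andP [bS lb]; have /andP [wb fS] := S_nonleaf b bS lb.
  by have /andP [ebf lf] := leaf_nbrP wb.
exists B, leaf_nbr; split.
- by apply/subsetP => b; rewrite inE => /andP [].
- move=> b1 b2 /fB [_ eb1 lf _] /fB [_ eb2 _ _] f12.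
  by apply: (leaf_adj_uniq lf); rewrite e_sym // f12.
- apply/setP => y; rewrite in_setU; apply/idP/orP => [yS | [|/imsetP [b /fB [_ _ _ fS] ->] //]].
    have [ly | ly] := boolP (leaf e y); last by left; rewrite inE yS.
    have [s sS /andP [eys ls]] := S_leaf y yS ly.
    have sB : s \in B by rewrite inE sS.
    right; apply/imsetP; exists s => //.
    have /andP [ws _] := S_nonleaf s sS ls.
    by apply/set1P; rewrite -(weak_support_leaf_nbrs ws) in_leaf_nbrs e_sym eys.
  by rewrite inE => /andP [].
- rewrite disjoint_sym disjoints_subset; apply/subsetP => y /imsetP [b /fB [_ _ lf _] ->].
  by rewrite !inE lf andbF.
move=> b /fB [bS ebf lf _]; apply/setP => w; rewrite !inE.
case: (eqVneq w b) => [-> | wb]; first by rewrite bS e_sym.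
by apply/negbTE/andP => -[_ efw]; case/eqP: wb; apply: leaf_adj_uniq lf _ efw; rewrite e_sym.
Qed.

Definition enclosed (D : {set T}) v := cnbhd e v \subset D.

Lemma enclosed_mem D v : enclosed D v -> v \in D.
Proof. by move/subsetP; apply; rewrite in_cnbhd eqxx. Qed.

Lemma enclosed_nbr_mem D v u : enclosed D v -> e v u -> u \in D.
Proof. by move/subsetP => v_enc evu; apply: v_enc; rewrite in_cnbhd evu orbT. Qed.

Lemma enclosed_leaf_nbr D v w : enclosed D v -> e v w -> leaf e w -> enclosed D w.
Proof.
move=> v_enc evw lw; apply/subsetP => x; rewrite in_cnbhd => /predU1P [-> | ewx].
  exact: enclosed_nbr_mem v_enc evw.
have -> : x = v by apply: leaf_adj_uniq lw _ ewx; rewrite e_sym.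
exact: enclosed_mem.
Qed.

Definition removable (D A : {set T}) : Prop :=
  [/\ {in A, forall a, enclosed D a},
      {in A, forall a, exists2 y, e a y & y \notin A} &
      forall u, enclosed D u -> u \notin A -> #|nbhd e u :&: A| != 1].

Lemma certified_setD D A :
  certified_dominating e D -> removable D A -> certified_dominating e (D :\: A).
Proof.
move=> [domD certD] [A_enc A_out A_card]; split.
- move=> x; rewrite inE negb_and negbK; case xA: (x \in A) => /= xD.
    have [y exy yA] := A_out x xA.
    by exists y; rewrite // inE yA (enclosed_nbr_mem (A_enc x xA) exy).
  have [y yD exy] := domD x xD.
  exists y => //; rewrite inE yD andbT; apply: contra xD => yA.
  by rewrite (enclosed_nbr_mem (A_enc y yA)) // e_sym.
move=> u; rewrite inE => /andP [uA uD].
have [u_enc | u_nenc] := boolP (enclosed D u).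
  have -> : nbhd e u :\: (D :\: A) = nbhd e u :&: A.
    apply/setP => w; rewrite !inE; case euw: (e u w); rewrite ?andbF ?andbT //.
    by rewrite (enclosed_nbr_mem u_enc euw) andbT negbK.
  by case: #|_| (A_card u u_enc uA) => [|[|n]] // _; [left | right].
have [/cards0_eq out0 | out2] := certD u uD.
  case/negP: u_nenc; apply/subsetP => w; rewrite in_cnbhd => /predU1P [-> // | euw].
  apply: contraT => wD.
  have : w \in nbhd e u :\: D by rewrite inE wD in_nbhd.
  by rewrite out0 inE.
right; apply: leq_trans out2 (subset_leq_card _).
by apply/subsetP => w; rewrite !inE => /andP [/negbTE -> ->]; rewrite andbF.
Qed.

Lemma minimal_not_removable D A :
  minimal_certified_dominating e D -> A != set0 -> ~ removable D A.
Proof.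
move=> [D_cert D_min] /set0Pn [a aA] A_rem.
have [A_enc _ _] := A_rem.
apply: (D_min (D :\: A)); last exact: certified_setD.
rewrite properEneq subsetDl andbT; apply/eqP => DE.
by have := enclosed_mem (A_enc a aA); rewrite -DE inE aA.
Qed.

Lemma leaf_edge_mem D a b :
  certified_dominating e D -> leaf e a -> leaf e b -> e a b -> a \in D.
Proof.
move=> [domD certD] la lb eab; apply: contraT => aD.
have [y yD eay] := domD a aD; have yb := leaf_adj_uniq la eab eay; subst y.
have : nbhd e b :\: D = [set a].
  rewrite (leaf_nbhd lb (_ : e b a)); last by rewrite e_sym.
  by apply/setP => w; rewrite !inE; case: (eqVneq w a) => [-> | _]; rewrite ?aD ?andbF.
by move=> out_b; case: (certD b yD); rewrite out_b cards1.
Qed.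

Lemma enclosed_leaf_edge D x u :
  certified_dominating e D -> connected_graph e -> leaf e x -> leaf e u -> e x u ->
  [set v | enclosed D v] = [set x; u].
Proof.
move=> D_cert e_conn lx lu exu.
have in_xu := connected_leaf_edge e_conn lx lu exu.
have xu_D : [set x; u] \subset D.
  apply/subsetP => v /set2P [] ->; first exact: leaf_edge_mem D_cert lx lu exu.
  by apply: leaf_edge_mem D_cert lu lx _; rewrite e_sym.
apply/setP => v; rewrite inE in_xu; apply/subsetP => w _; exact: subsetP xu_D w (in_xu w).
Qed.

Section Pendants.
Variables D Y : {set T}.

Definition plain_enclosed := [set z | [&& enclosed D z, ~~ leaf e z & ~~ Defs.support e z]].

Definition pendants :=
  [set l | [&& enclosed D l, leaf e l & [exists s, e l s && [exists y in Y, e s y]]]].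

Hypothesis Y_plain : Y \subset plain_enclosed.

Lemma core_plainP y : y \in Y -> [&& enclosed D y, ~~ leaf e y & ~~ Defs.support e y].
Proof. by move/(subsetP Y_plain); rewrite inE. Qed.

Lemma core_nonleaf y : y \in Y -> ~~ leaf e y.
Proof. by case/core_plainP/and3P. Qed.

Lemma support_notin_core s : Defs.support e s -> s \notin Y.
Proof. by move=> ss; apply: contraL ss => /core_plainP /and3P []. Qed.

Lemma pendant_leaf l : l \in pendants -> leaf e l.
Proof. by rewrite inE => /and3P []. Qed.

Lemma pendant_nbr_nonleaf l s : l \in pendants -> e l s -> ~~ leaf e s.
Proof.
rewrite inE => /and3P [_ ll /existsP [t /andP [elt /exists_inP [y yY ety]]]] els.
rewrite -(leaf_adj_uniq ll els elt); apply: contraL (core_nonleaf yY) => lt.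
by rewrite (leaf_adj_uniq lt (_ : e t l) ety) ?ll // e_sym.
Qed.

Lemma pendant_nbr_out l : l \in pendants -> exists2 s, e l s & s \notin Y :|: pendants.
Proof.
move=> lP; have := lP; rewrite inE => /and3P [_ _ /existsP [s /andP [els _]]].
exists s; rewrite // in_setU negb_or support_notin_core /=.
  by apply: contra (pendant_nbr_nonleaf lP els) => /pendant_leaf.
by apply: leaf_adj_support (pendant_leaf lP); rewrite e_sym.
Qed.

Hypothesis Y_card : {in plain_enclosed :\: Y, forall u, #|nbhd e u :&: Y| != 1}.

Lemma card_nbhdI_pendants u :
  enclosed D u -> u \notin Y :|: pendants -> #|nbhd e u :&: (Y :|: pendants)| != 1.
Proof.
move=> u_enc; rewrite in_setU negb_or => /andP [uY uP].
have [u_leaf | u_nleaf] := boolP (leaf e u).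
  have [s nbhd_u] := cards1P u_leaf; have eus : e u s by rewrite -in_nbhd nbhd_u set11.
  rewrite card_nbhdI_eq0 // => x eux; rewrite (leaf_adj_uniq u_leaf eus eux) in_setU negb_or.
  rewrite support_notin_core /=; last by apply: leaf_adj_support u_leaf; rewrite e_sym.
  by apply: contraL u_leaf => sP; apply: pendant_nbr_nonleaf sP _; rewrite e_sym.
have [u_supp | u_nsupp] := boolP (Defs.support e u); last first.
  have -> : nbhd e u :&: (Y :|: pendants) = nbhd e u :&: Y.
    apply/setP => x; rewrite !inE; case eux: (e u x) => //=.
    by rewrite orbC andbC (contraNF (leaf_adj_support eux)).
  by apply: Y_card; rewrite !inE uY u_enc u_nleaf u_nsupp.
have [/exists_inP [y yY euy] | noY] := boolP [exists y in Y, e u y].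
  have /existsP [l /andP [eul ll]] := u_supp.
  have lP : l \in pendants.
    rewrite inE (enclosed_leaf_nbr u_enc eul ll) ll; apply/existsP; exists u.
    by rewrite e_sym eul; apply/exists_inP; exists y.
  rewrite neq_ltn; apply/orP; right; apply/card_gt1P; exists y, l.
  rewrite !in_setI !in_setU !in_nbhd euy eul yY lP orbT; split=> //.
  by apply: contraTneq ll => <-; apply: core_nonleaf.
rewrite card_nbhdI_eq0 // => x eux; rewrite in_setU negb_or; apply/andP; split.
  by apply: contra noY => xY; apply/exists_inP; exists x.
apply: contra noY; rewrite inE => /and3P [_ lx /existsP [t /andP [ext tY]]].
by rewrite -(leaf_adj_uniq lx (_ : e x u) ext) // e_sym.
Qed.

Hypothesis Y_out : {in Y, forall a, exists2 y, e a y & y \notin Y}.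

Lemma removable_with_pendants : removable D (Y :|: pendants).
Proof.
split; last exact: card_nbhdI_pendants.
  by move=> a; rewrite in_setU => /orP [/core_plainP | ]; rewrite ?inE => /and3P [].
move=> a; rewrite in_setU => /orP [aY | /pendant_nbr_out //].
have [y eay yY] := Y_out aY; exists y; rewrite // in_setU negb_or yY /=.
apply: contraL (core_plainP aY) => /pendant_leaf ly.
by rewrite (leaf_adj_support eay ly) !andbF.
Qed.

End Pendants.

Section MinimalCertified.
Variable D : {set T}.
Hypotheses (D_min : minimal_certified_dominating e D) (e_nbr : forall v, exists u, e v u).

Lemma enclosed_has_enclosed_nbr v : enclosed D v -> exists2 u, enclosed D u & e v u.
Proof.
move=> v_enc; have [/existsP [u /andP [u_enc evu]] | none] :=
  boolP [exists u, enclosed D u && e v u]; first by exists u.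
case: (minimal_not_removable (A := [set v]) D_min); first by apply/set0Pn; exists v; rewrite inE.
split.
- by move=> a /set1P ->.
- by move=> a /set1P ->; have [y evy] := e_nbr v; exists y; rewrite // inE eq_sym adj_neq.
move=> u u_enc _; rewrite card_nbhdI_eq0 // => x eux; apply/set1P => xv; subst x.
by move/existsPn: none => /(_ u); rewrite u_enc e_sym eux.
Qed.

Lemma enclosed_leaf_nbrs_le1 v : enclosed D v -> #|leaf_nbrs e v| <= 1.
Proof.
move=> v_enc; rewrite leqNgt; apply/negP => /card_gt1P [w1 [w2 [w1L w2L w12]]].
move: w1L w2L; rewrite !in_leaf_nbrs => /andP [ev1 l1] /andP [ev2 l2].
case: (minimal_not_removable (A := [set w1; w2]) D_min).
  by apply/set0Pn; exists w1; rewrite set21.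
split.
- by move=> a /set2P [] ->; apply: enclosed_leaf_nbr v_enc _ _.
- by move=> a /set2P [] ->; exists v; rewrite 1?e_sym // !inE negb_or !adj_neq.
move=> u _ _; have [-> | uv] := eqVneq u v.
  rewrite (setIidPr _) ?cards2 ?w12 //.
  by apply/subsetP => x /set2P [] ->; rewrite in_nbhd.
rewrite card_nbhdI_eq0 // => x eux; apply/set2P => -[xw | xw]; subst x; case/eqP: uv.
  by apply: (leaf_adj_uniq l1); rewrite e_sym.
by apply: (leaf_adj_uniq l2); rewrite e_sym.
Qed.

Lemma enclosed_nonleaf_support v : enclosed D v -> ~~ leaf e v -> Defs.support e v.
Proof.
move=> v_enc lv; apply: contraT => nsv.
have v_plain : v \in plain_enclosed D by rewrite inE v_enc lv.
have plain_deg : {in plain_enclosed D, forall z, 1 < #|nbhd e z|}.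
  move=> z; rewrite inE => /and3P [_ lz _]; have [y ezy] := e_nbr z.
  have : 0 < #|nbhd e z| by apply/card_gt0P; exists y; rewrite in_nbhd.
  by move: lz; rewrite /leaf; case: #|_| => [|[|n]].
have plain_n0 : plain_enclosed D != set0 by apply/set0Pn; exists v.
have [Y [Yn0 Y_plain Y_out Y_card]] := exists_core_subset plain_n0 plain_deg.
case: (minimal_not_removable (A := Y :|: pendants D Y) D_min).
  by have [y yY] := set0Pn _ Yn0; apply/set0Pn; exists y; rewrite in_setU yY.
exact: removable_with_pendants.
Qed.

Lemma enclosed_leaf_or_weak_support v : enclosed D v -> leaf e v || weak_support e v.
Proof.
move=> v_enc; apply/orP; have [lv | lv] := boolP (leaf e v); [by left | right].
rewrite /weak_support eqn_leq enclosed_leaf_nbrs_le1 //=.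
have /existsP [l /andP [evl ll]] := enclosed_nonleaf_support v_enc lv.
by apply/card_gt0P; exists l; rewrite in_leaf_nbrs evl.
Qed.

End MinimalCertified.

End Graph.

Theorem lemma3p1 (T : finType) (e : rel T) :
  simple_graph e -> connected_graph e -> 2 <= #|T| ->
  forall D : {set T}, minimal_certified_dominating e D ->
  (forall v : T, cnbhd e v \subset D -> leaf e v || weak_support e v) /\
  (let S := [set v | cnbhd e v \subset D] in
   S = set0 \/ induced_corona e S).
Proof.
move=> [e_sym e_irr] e_conn cardT D D_min; have [D_cert _] := D_min.
have e_nbr := connected_nbr e_conn cardT.
have leaf_or_weak := enclosed_leaf_or_weak_support e_sym e_irr D_min e_nbr.
split=> // S; right.
have [/existsP [x /existsP [u /and3P [lx exu lu]]] | noK2] :=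
  boolP [exists x, exists u, [&& leaf e x, e x u & leaf e u]].
  rewrite /S (enclosed_leaf_edge e_sym D_cert e_conn lx lu exu).
  exact: induced_corona_edge.
apply: (induced_corona_pendants e_sym) => [b | y]; rewrite inE.
  move=> b_enc lb; have wb : weak_support e b by move: (leaf_or_weak b b_enc); rewrite (negbTE lb).
  have /andP [ebf lf] := leaf_nbrP wb.
  have f_enc := enclosed_leaf_nbr e_sym b_enc ebf lf.
  by rewrite wb inE.
move=> y_enc ly; have [s s_enc eys] := enclosed_has_enclosed_nbr e_sym e_irr D_min e_nbr y_enc.
exists s; first by rewrite inE.
rewrite eys; apply: contra noK2 => ls; apply/existsP; exists y; apply/existsP; exists s.
by rewrite ly eys ls.
Qed.
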